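(* Let $p\ge 5$ be a prime and let $N=\frac{1}{0}$ (the north pole) be a vertex of the level $p$ Farey map $\mathcal{M}_3(p)$. Define the finite sequence of vertices $$S=S(p)=\frac{1}{(p-1)/2},\ \frac{1}{(p-3)/2},\ \dots,\ \frac{1}{3},\ \frac{1}{2},\ \frac{2}{3},\ \frac{3}{4},\ \dots,\ \frac{(p-3)/2}{(p-1)/2},$$ i.e. first the terms $\frac{1}{k}$ for $k=\frac{p-1}{2},\frac{p-3}{2},\dots,2$ (decreasing), followed by the terms $\frac{m-1}{m}$ for $m=3,4,\dots,\frac{p-1}{2}$ (increasing). For $k\in\mathbb{Z}$ let $S+k$ denote the sequence obtained by replacing each term $\frac{x}{c}$ of $S$ by $\frac{x}{c}+k:=\frac{x+kc}{c}$. Let $S_2(p)$ be the concatenation $S\,(S+1)\,(S+2)\cdots(S+p-1)$, and let $S_1(p)$ be the sequence $\frac{0}{1},\frac{1}{1},\dots,\frac{p-1}{1}$. Then: (i) every term of $S_2(p)$ is a vertex at graph-theoretic distance exactly $2$ from $N$ in $\mathcal{M}_3(p)$, and every vertex at distance $2$ from $N$ occurs in $S_2(p)$; (ii) $S_2(p)$ is a Farey circuit, i.e. each term is joined by an edge of $\mathcal{M}_3(p)$ to the next term, and the last term is joined by an edge to the first term; (iii) $S_1(p)$ is a Farey circuit of length $p$ consisting of the vertices at distance $1$ from $N$, and $S_2(p)$ has length $p(p-4)$; (iv) $\mathcal{M}_3(p)$ has exactly $\frac{p-1}{2}$ poles.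
   Context: The Farey map $\mathcal{M}_3$ has vertex set $\mathbb{Q}\cup\{\infty\}$ with $\infty=\frac10$, two reduced fractions $\frac ac,\frac bd$ being joined by an edge iff $ad-bc=\pm1$; the modular group $\Gamma=\mathrm{PSL}(2,\mathbb{Z})$ acts on it by Möbius transformations. For $n\ge2$, $\mathcal{M}_3(n)=\mathcal{M}_3/\Gamma(n)$ is the quotient by the principal congruence subgroup $\Gamma(n)$. Concretely, for $p$ prime, the vertices of $\mathcal{M}_3(p)$ are the ''Farey fractions'' $\frac{a}{c}$ with $a,c\in\mathbb{Z}_p$ not both zero, where $\frac{a}{c}$ and $\frac{-a}{-c}$ denote the same vertex (so $\frac{a}{c}$ is the image of a fraction in $\mathcal{M}_3$ with numerator $\equiv a$ and denominator $\equiv c$ mod $p$), and two vertices $\frac ac,\frac bd$ are joined by an edge iff $ad-bc\equiv\pm1 \pmod p$. The graph-theoretic distance between two vertices is the length of a shortest edge path joining them. A Farey circuit is a sequence $f_1,\dots,f_k$ of vertices with $f_i$ joined by an edge to $f_{i+1}$, indices taken mod $k$ (terms may repeat). A pole is a vertex of the form $\frac{a}{0}$ (with $a\neq 0$). *)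

From HB Require Import structures.
From mathcomp Require Import all_boot all_order all_algebra.
Set Implicit Arguments. Unset Strict Implicit. Unset Printing Implicit Defensive.
Import GRing.Theory.
Local Open Scope ring_scope.

(* A Farey fraction a/c is represented by the pair (a, c) in F_p x F_p;
   the pairs (a,c) and (-a,-c) represent the same vertex. *)
Definition fpair (p : nat) := ('F_p * 'F_p)%type.

Definition negp (p : nat) (x : fpair p) : fpair p := (- x.1, - x.2).

Definition is_vertex (p : nat) (x : fpair p) : bool := x != (0, 0).

Definition same_vertex (p : nat) (x y : fpair p) : bool :=
  (x == y) || (x == negp y).

Definition adj (p : nat) (x y : fpair p) : bool :=
  (x.1 * y.2 - x.2 * y.1 == 1) || (x.1 * y.2 - x.2 * y.1 == -1).

Fixpoint walk (p : nat) (n : nat) (u v : fpair p) : Prop :=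
  match n with
  | 0%N => same_vertex u v
  | n'.+1 => exists w, adj u w /\ walk n' w v
  end.

Definition dist_is (p : nat) (u v : fpair p) (n : nat) : Prop :=
  walk n u v /\ forall m, (m < n)%N -> ~ walk m u v.

Definition farey_circuit (p : nat) (s : seq (fpair p)) : bool :=
  (s != [::]) && cycle (@adj p) s.

Definition northN (p : nat) : fpair p := (1, 0).

Definition shiftv (p : nat) (k : nat) (x : fpair p) : fpair p :=
  (x.1 + k%:R * x.2, x.2).

Definition seqS (p : nat) : seq (fpair p) :=
  [seq (1, k%:R) | k <- rev (iota 2 ((p.-1)./2 - 1))] ++
  [seq ((m.-1)%:R, m%:R) | m <- iota 3 ((p.-1)./2 - 2)].

Definition seqS2 (p : nat) : seq (fpair p) :=
  flatten [seq map (shiftv k) (seqS p) | k <- iota 0 p].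

Definition seqS1 (p : nat) : seq (fpair p) :=
  [seq (k%:R, 1) | k <- iota 0 p].

Definition vclass (p : nat) (x : fpair p) : {set fpair p} := [set x; negp x].

Definition poles (p : nat) : {set {set fpair p}} :=
  [set vclass x | x in [pred x : fpair p | (x.2 == 0) && (x.1 != 0)]].

From mathcomp Require Import all_boot all_order all_algebra.
From mathcomp Require Import ring zify.
Set Implicit Arguments. Unset Strict Implicit. Unset Printing Implicit Defensive.
Import GRing.Theory.
Local Open Scope ring_scope.

(* The neighbours of N = 1/0 are the vertices with denominator +-1, and a
   vertex a/c with c <> 0, +-1 is at distance 2 through the neighbour
   ((1 + a)/c)/1 of N; the only poles adjacent to a neighbour of N are +-N.
   Up to sign these denominators are 2, ..., (p-1)/2, and a/c is the
   translate of 1/c by (a - 1)/c.  Translations preserve determinants,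
   consecutive terms of S have determinant -1, and the last term of S + k is
   joined to the first term of S + k + 1 because
   (p-3)/2 * (p-1)/2 - (p-1)/2 * (p+1)/2 = 1 - p.  As S + p = S, the p
   translates of S close up into a circuit; S1 is the same construction
   applied to the single vertex 0/1.  Poles a/0 are determined up to sign by
   a in {1, ..., (p-1)/2}. *)

Section Iota.
Variables (T : Type) (e : rel T) (f : nat -> T).

Lemma path_map_iota m n :
  (forall i, (m <= i)%N -> e (f i) (f i.+1)) -> path e (f m) [seq f i | i <- iota m.+1 n].
Proof.
elim: n m => [//|n IHn] m step /=.
by rewrite step // IHn // => i /ltnW; exact: step.
Qed.

Lemma last_map_iota m n : last (f m) [seq f i | i <- iota m.+1 n] = f (m + n).
Proof. by rewrite last_map; elim: n m => [|n IHn] m /=; rewrite ?addn0 ?IHn ?addnS. Qed.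

Lemma rev_iotaS m n : rev (iota m n.+1) = (m + n)%N :: rev (iota m n).
Proof. by rewrite -addn1 iotaD rev_cat. Qed.

Lemma path_map_rev_iota m n :
  (forall i, e (f i.+1) (f i)) -> path e (f (m + n)) [seq f i | i <- rev (iota m n)].
Proof.
move=> step; elim: n => [//|n IHn].
by rewrite rev_iotaS /= addnS step.
Qed.

Lemma last_map_rev_iota m n : last (f (m + n)) [seq f i | i <- rev (iota m n)] = f m.
Proof. by elim: n => [|n IHn]; rewrite ?addn0 // rev_iotaS /=. Qed.

End Iota.

Section FareyMap.
Variable p : nat.
Local Notation N := (northN p).
Implicit Types (x y z u v w : fpair p).

Definition det x y : 'F_p := x.1 * y.2 - x.2 * y.1.

Lemma adjE x y : adj x y = (det x y ^+ 2 == 1).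
Proof. by rewrite sqrf_eq1. Qed.

Lemma det_negr x y : det x (negp y) = - det x y.
Proof. rewrite /det /=; ring. Qed.

Lemma det_shiftv k x y : det (shiftv k x) (shiftv k y) = det x y.
Proof. rewrite /det /=; ring. Qed.

Lemma adj_negr x y : adj x (negp y) = adj x y.
Proof. by rewrite !adjE det_negr sqrrN. Qed.

Lemma adj_shiftv k x y : adj (shiftv k x) (shiftv k y) = adj x y.
Proof. by rewrite !adjE det_shiftv. Qed.

Lemma adj_northl v : adj N v = (v.2 ^+ 2 == 1).
Proof. by rewrite adjE /det /= mul1r mul0r subr0. Qed.

Lemma negpK : involutive (@negp p).
Proof. by case=> a c; rewrite /negp /= !opprK. Qed.

Lemma same_vertex_refl x : same_vertex x x.
Proof. by rewrite /same_vertex eqxx. Qed.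

Lemma same_vertex_trans x y z :
  same_vertex x y -> same_vertex y z -> same_vertex x z.
Proof.
rewrite /same_vertex => /orP[/eqP->|/eqP->] // /orP[/eqP->|/eqP->].
- by rewrite eqxx orbT.
- by rewrite negpK eqxx.
Qed.

Lemma same_vertex_adjr x y z : same_vertex y z -> adj x y = adj x z.
Proof. by case/orP=> /eqP ->; rewrite ?adj_negr. Qed.

Lemma same_vertex_den2 x y : same_vertex x y -> x.2 ^+ 2 = y.2 ^+ 2.
Proof. by case/orP=> /eqP ->; rewrite ?sqrrN. Qed.

Lemma same_vertex_north_den v : same_vertex N v -> v.2 = 0.
Proof. by move/same_vertex_den2/esym/eqP; rewrite expr0n sqrf_eq0 => /eqP. Qed.

Lemma same_vertex_north_pole w y :
  adj N w -> adj w y -> y.2 = 0 -> same_vertex N y.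
Proof.
case: y => a c /=; rewrite adj_northl adjE /det /= => /eqP w2 + c0.
rewrite c0 mulr0 sub0r sqrrN exprMn w2 mul1r sqrf_eq1.
by case/orP=> /eqP->; rewrite /same_vertex /negp /northN //= opprK oppr0 eqxx orbT.
Qed.

Lemma walk1E u v : walk 1 u v <-> adj u v.
Proof.
split; first by case=> w [uw wv]; rewrite -(same_vertex_adjr _ wv).
by move=> uv; exists v; split; last exact: same_vertex_refl.
Qed.

Lemma dist1_northE v : dist_is N v 1 <-> adj N v.
Proof.
split; first by case=> /walk1E.
move=> Nv; split; first exact/walk1E.
case=> // _ /same_vertex_north_den v20.
by move: Nv; rewrite adj_northl v20 expr0n eq_sym oner_eq0.
Qed.

Lemma dist2_northE v : dist_is N v 2 <-> v.2 != 0 /\ ~~ adj N v.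
Proof.
split.
  case=> [[w [Nw [y [wy yv]]]] hmin]; split; last first.
    by apply/negP => /walk1E; exact: hmin.
  apply/negP => /eqP v20; apply: (hmin 0%N) => //=.
  have y20 : y.2 = 0.
    by apply/eqP; rewrite -sqrf_eq0 (same_vertex_den2 yv) v20 expr0n.
  exact: same_vertex_trans (same_vertex_north_pole Nw wy y20) yv.
case=> v20 Nv; split.
  exists ((1 + v.1) / v.2, 1); split; first by rewrite adj_northl expr1n.
  exists v; split; last exact: same_vertex_refl.
  by rewrite /adj /= divfK // mul1r addrK eqxx.
case=> [|[|//]] _; first by move/same_vertex_north_den/eqP; exact/negP.
by move/walk1E; exact/negP.
Qed.

Lemma is_vertex_den x : x.2 != 0 -> is_vertex x.
Proof. by apply: contra => /eqP->. Qed.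

Lemma same_vertex_den_sign v c :
  v.2 = c \/ v.2 = - c -> exists2 u, same_vertex u v & u.2 = c.
Proof.
case=> vc; first by exists v; [exact: same_vertex_refl|].
by exists (negp v); rewrite /= ?vc ?opprK // /same_vertex eqxx orbT.
Qed.

Lemma mem_vclass x y : (y \in vclass x) = same_vertex y x.
Proof. by rewrite in_set2. Qed.

Lemma vclass_negp x : vclass (negp x) = vclass x.
Proof. by rewrite /vclass negpK setUC. Qed.

Lemma adj_unit_fracS i : @adj p (1, i.+1%:R) (1, i%:R).
Proof. by rewrite /adj /= -natr1 mul1r mulr1 opprD addrA subrr sub0r eqxx orbT. Qed.

Lemma adj_consecutive i : @adj p (i%:R, i.+1%:R) (i.+1%:R, i.+2%:R).
Proof.
rewrite /adj /=.
have -> : i%:R * i.+2%:R - i.+1%:R * i.+1%:R = -1 :> 'F_p by rewrite -!natr1; ring.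
by rewrite eqxx orbT.
Qed.

End FareyMap.

Section Shifts.
Variable p : nat.
Implicit Types (x y a : fpair p) (s t : seq (fpair p)).

Lemma shiftv_char k x : k%:R = 0 :> 'F_p -> shiftv k x = x.
Proof. by move=> k0; rewrite /shiftv k0 mul0r addr0; case: x. Qed.

Lemma shiftvS k x : shiftv k.+1 x = shiftv k (shiftv 1 x).
Proof. by rewrite /shiftv /= -natr1; congr (_, _); ring. Qed.

Lemma path_shiftv k x s : path (@adj p) (shiftv k x) (map (shiftv k) s) = path (@adj p) x s.
Proof. by rewrite path_map; apply: eq_path => y z; exact: adj_shiftv. Qed.

Lemma path_shift_blocks a t n m x :
  path (@adj p) a t -> adj (last a t) (shiftv 1 a) -> adj x (shiftv m a) ->
  path (@adj p) x ([seq shiftv k y | k <- iota m n, y <- a :: t] ++ [:: shiftv (m + n) a]).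
Proof.
move=> at_path a_next; elim: n m x => [|n IHn] m x xa; first by rewrite /= addn0 xa.
rewrite /= xa -catA cat_path path_shiftv at_path /= last_map -addSnnS.
by apply: IHn; rewrite shiftvS adj_shiftv.
Qed.

Lemma cycle_shift_blocks a t n :
  path (@adj p) a t -> adj (last a t) (shiftv 1 a) -> n%:R = 0 :> 'F_p ->
  cycle (@adj p) [seq shiftv k y | k <- iota 0 n, y <- a :: t].
Proof.
case: n => [//|n] at_path a_next n0.
rewrite /= -cats1 -catA cat_path path_shiftv at_path /= last_map.
have shiftv0 y : shiftv 0 y = y by exact: shiftv_char.
have := path_shift_blocks n (m := 1) (x := shiftv 0 (last a t)) at_path a_next.
by rewrite add1n (shiftv_char _ n0) !shiftv0; apply.
Qed.

Lemma shift_blocks_den n s x :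
  x \in [seq shiftv k y | k <- iota 0 n, y <- s] -> exists2 y, y \in s & x.2 = y.2.
Proof. by case/allpairsP => -[k y] [_ /= ys ->]; exists y. Qed.

End Shifts.

Lemma prime_ge5_shape p : prime p -> (5 <= p)%N -> exists q, p = (q.*2 + 5)%N.
Proof.
move=> p_prime p_ge5; have [p2|p_odd] := even_prime p_prime; first by rewrite p2 in p_ge5.
exists (p./2 - 2)%N; have := odd_double_half p; rewrite p_odd -muln2; lia.
Qed.

Section OddPrime.
Variables p q : nat.
Hypotheses (p_prime : prime p) (p_eq : p = (q.*2 + 5)%N).
Local Notation N := (northN p).
Implicit Types (s : seq (fpair p)) (x y u v : fpair p).
Local Notation seqS_tail :=
  ([seq (1, k%:R) | k <- rev (iota 2 q)] ++ [seq ((m.-1)%:R, m%:R) | m <- iota 3 q]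
   : seq (fpair p)).

Lemma natr_p : p%:R = 0 :> 'F_p.
Proof. exact: pchar_Fp_0. Qed.

Lemma val_Fp_lt (y : 'F_p) : (val y < p)%N.
Proof. by case: y => n /=; rewrite (Fp_cast p_prime). Qed.

Lemma natr_Fp_val (y : 'F_p) : (val y)%:R = y.
Proof. by apply: val_inj; rewrite /= val_Fp_nat // modn_small // val_Fp_lt. Qed.

Lemma natr_Fp_eq0 n : (n%:R == 0 :> 'F_p) = (p %| n)%N.
Proof. by rewrite (dvdn_pcharf (pchar_Fp p_prime)). Qed.

Lemma natr_Fp_inj i j : (i < p)%N -> (j < p)%N -> i%:R = j%:R :> 'F_p -> i = j.
Proof.
move=> ip jp /(congr1 val) /=.
by rewrite !val_Fp_nat // !modn_small.
Qed.

Lemma Fp_half_sign (y : 'F_p) :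
  y != 0 -> exists2 j, (0 < j <= q.+2)%N & y = j%:R \/ y = - j%:R.
Proof.
move=> y0; have yp := val_Fp_lt y; have y_val := natr_Fp_val y.
have val_y0 : (0 < val y)%N by rewrite lt0n; apply: contraNneq y0 => val0; rewrite -y_val val0.
have [y_small|y_big] := leqP (val y) q.+2; first by exists (val y); [lia | left].
exists (p - val y)%N; first lia.
by right; rewrite natrB ?natr_p ?sub0r ?opprK // ltnW.
Qed.

Lemma Fp_half_inj i j : (0 < i <= q.+2)%N -> (0 < j <= q.+2)%N ->
  (i%:R = j%:R :> 'F_p) \/ (i%:R = - j%:R :> 'F_p) -> i = j.
Proof.
move=> hi hj [ij|ij]; first by apply: natr_Fp_inj ij; lia.
have : (i + j)%:R == 0 :> 'F_p by rewrite natrD ij addNr.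
rewrite natr_Fp_eq0 => /dvdn_leq; lia.
Qed.

Lemma natr_half_neq0 j : (0 < j <= q.+2)%N -> j%:R != 0 :> 'F_p.
Proof. by move=> hj; rewrite natr_Fp_eq0; apply/negP => /dvdn_leq; lia. Qed.

Lemma mem_shift_blocks s b u :
  u.2 != 0 -> (b, u.2) \in s -> u \in [seq shiftv k y | k <- iota 0 p, y <- s].
Proof.
move=> u20 bs; pose k := val ((u.1 - b) / u.2).
have -> : u = shiftv k (b, u.2).
  by rewrite /shiftv /= natr_Fp_val divfK // addrC subrK -surjective_pairing.
by apply: allpairs_f; rewrite // mem_iota val_Fp_lt.
Qed.

Lemma half_pred_p : (p.-1)./2 = q.+2.
Proof. by rewrite p_eq -addnn; lia. Qed.

Lemma seqS_cons : seqS p = (1, q.+2%:R) :: seqS_tail.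
Proof. by rewrite /seqS half_pred_p subn1 !subSS subn0 /= rev_iotaS add2n. Qed.

Lemma size_seqS : size (seqS p) = (p - 4)%N.
Proof. rewrite seqS_cons /= size_cat !size_map size_rev !size_iota p_eq; lia. Qed.

Lemma path_seqS : path (@adj p) (1, q.+2%:R) seqS_tail.
Proof.
pose g m : fpair p := ((m.-1)%:R, m%:R).
have := path_map_rev_iota (f := fun k => (1, k%:R) : fpair p) 2 q (@adj_unit_fracS p).
have := last_map_rev_iota (fun k => (1, k%:R) : fpair p) 2 q.
rewrite add2n cat_path => -> -> /=.
have := path_map_iota (f := g) (m := 2) q; rewrite /g; apply => -[|i] // _.
exact: adj_consecutive.
Qed.

Lemma last_seqS : last (1, q.+2%:R) seqS_tail = (q.+1%:R, q.+2%:R).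
Proof.
rewrite last_cat (last_map_rev_iota (fun k => (1, k%:R) : fpair p) 2 q).
exact: (last_map_iota (fun m => ((m.-1)%:R, m%:R) : fpair p) 2 q).
Qed.

Lemma adj_seqS_shift : @adj p (q.+1%:R, q.+2%:R) (shiftv 1 (1, q.+2%:R)).
Proof.
rewrite /adj /=.
have -> : q.+1%:R * q.+2%:R - q.+2%:R * (1 + 1 * q.+2%:R) = 1 - (q.*2 + 5)%:R :> 'F_p.
  by rewrite -!natr1 -muln2 natrD natrM; ring.
by rewrite -p_eq natr_p subr0 eqxx.
Qed.

Lemma size_seqS2 : size (seqS2 p) = (p * (p - 4))%N.
Proof. by rewrite size_allpairs size_iota size_seqS. Qed.

Lemma farey_circuit_seqS2 : farey_circuit (seqS2 p).
Proof.
rewrite /farey_circuit -size_eq0 size_seqS2 muln_eq0; apply/andP; split.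
  by rewrite p_eq; lia.
rewrite /seqS2 seqS_cons; apply: (cycle_shift_blocks _ _ natr_p).
  exact: path_seqS.
by rewrite last_seqS; exact: adj_seqS_shift.
Qed.

Lemma dist2_north_half v :
  dist_is N v 2 <-> exists2 j, (2 <= j <= q.+2)%N & v.2 = j%:R \/ v.2 = - j%:R.
Proof.
rewrite dist2_northE adj_northl sqrf_eq1; split.
  case=> v20 /norP[v21 v2N1]; have [j hj vj] := Fp_half_sign v20.
  exists j => //; suff: j != 1%N by lia.
  by apply/eqP => j1; move: vj; rewrite j1 => -[] /eqP; apply/negP.
case=> j hj vj; split.
  have j0 : j%:R != 0 :> 'F_p by apply: natr_half_neq0; lia.
  by case: vj => ->; rewrite ?oppr_eq0.
apply/negP => /orP[] /eqP v2; suff j1 : 1%N = j by move: hj; rewrite -j1.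
  apply: Fp_half_inj; [by [] | lia |].
  by case: vj; rewrite v2 => e; [left | right].
apply: Fp_half_inj; [by [] | lia |].
case: vj; rewrite v2 => e; [right | left].
  by rewrite -e opprK.
exact: oppr_inj e.
Qed.

Lemma seqS_den y : y \in seqS p -> exists2 j, (2 <= j <= q.+2)%N & y.2 = j%:R.
Proof.
rewrite /seqS half_pred_p mem_cat => /orP[] /mapP[j].
  by rewrite mem_rev mem_iota => hj -> /=; exists j => //; lia.
by rewrite mem_iota => hj -> /=; exists j => //; lia.
Qed.

Lemma unit_frac_mem_seqS j : (2 <= j <= q.+2)%N -> (1, j%:R) \in seqS p.
Proof.
move=> hj; rewrite /seqS half_pred_p mem_cat; apply/orP; left.
by apply: (map_f (fun k => (1, k%:R) : fpair p)); rewrite mem_rev mem_iota; lia.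
Qed.

Lemma seqS2_dist2 x : x \in seqS2 p -> is_vertex x /\ dist_is N x 2.
Proof.
case/shift_blocks_den => y /seqS_den[j hj y2] x2.
have x_dist2 : dist_is N x 2 by apply/dist2_north_half; exists j; rewrite // x2; left.
by split=> //; apply: is_vertex_den; case/dist2_northE: x_dist2.
Qed.

Lemma dist2_mem_seqS2 v : dist_is N v 2 -> exists2 x, x \in seqS2 p & same_vertex x v.
Proof.
case/dist2_north_half => j hj /same_vertex_den_sign[u uv u2]; exists u => //.
apply: (mem_shift_blocks (b := 1)); first by rewrite u2 natr_half_neq0 //; lia.
by rewrite u2 unit_frac_mem_seqS.
Qed.

Lemma seqS1_shift : seqS1 p = [seq shiftv k y | k <- iota 0 p, y <- [:: (0, 1)]].
Proof. by rewrite /seqS1; elim: (iota 0 p) => //= k t ->; rewrite /shiftv /= add0r mulr1. Qed.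

Lemma size_seqS1 : size (seqS1 p) = p.
Proof. by rewrite size_map size_iota. Qed.

Lemma farey_circuit_seqS1 : farey_circuit (seqS1 p).
Proof.
rewrite /farey_circuit -size_eq0 size_seqS1; apply/andP; split; first by rewrite p_eq addnS.
rewrite seqS1_shift; apply: (cycle_shift_blocks _ _ natr_p) => //.
by rewrite /adj /= !(mul0r, mul1r, add0r) eqxx orbT.
Qed.

Lemma seqS1_dist1 x : x \in seqS1 p -> is_vertex x /\ dist_is N x 1.
Proof.
rewrite seqS1_shift => /shift_blocks_den[y]; rewrite inE => /eqP -> /= x2.
split; first by apply: is_vertex_den; rewrite x2 oner_neq0.
by apply/dist1_northE; rewrite adj_northl x2 expr1n.
Qed.

Lemma dist1_mem_seqS1 v : dist_is N v 1 -> exists2 x, x \in seqS1 p & same_vertex x v.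
Proof.
move/dist1_northE; rewrite adj_northl sqrf_eq1 => v2.
have [u uv u2] : exists2 u, same_vertex u v & u.2 = 1.
  by apply: same_vertex_den_sign; case/orP: v2 => /eqP; [left | right].
exists u => //; rewrite seqS1_shift; apply: (mem_shift_blocks (b := 0)).
  by rewrite u2 oner_neq0.
by rewrite u2 inE.
Qed.

Definition pole_class (i : 'I_q.+2) : {set fpair p} := vclass (i.+1%:R, 0).

Lemma pole_class_inj : injective pole_class.
Proof.
move=> i j eq_ij; have := ltn_ord i; have := ltn_ord j.
have : (i.+1%:R, 0) \in pole_class j by rewrite -eq_ij mem_vclass same_vertex_refl.
rewrite mem_vclass /same_vertex /negp /= !xpair_eqE oppr0 eqxx !andbT => ij_sign hj hi.
suff [] : i.+1 = j.+1 by move/val_inj.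
by apply: Fp_half_inj; [lia | lia | case/orP: ij_sign => /eqP; [left | right]].
Qed.

Lemma poles_pole_class : poles p = pole_class @: setT.
Proof.
apply/setP => X; apply/imsetP/imsetP => -[x]; last first.
  move=> _ ->; exists (x.+1%:R, 0) => //.
  by rewrite inE /=; apply: natr_half_neq0; exact: ltn_ord.
rewrite inE => /andP[/eqP x2 x10] ->.
have [j hj x1] := Fp_half_sign x10.
have jq : (j.-1 < q.+2)%N by lia.
exists (Ordinal jq) => //; rewrite /pole_class /= prednK; last lia.
case: x1 => x1; rewrite [x]surjective_pairing x1 x2 //.
by rewrite -vclass_negp /negp /= opprK oppr0.
Qed.

Lemma card_poles : #|poles p| = (p.-1)./2.
Proof.
by rewrite poles_pole_class card_imset ?cardsT ?card_ord ?half_pred_p //; exact: pole_class_inj.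
Qed.

End OddPrime.

Local Close Scope ring_scope.

Theorem theorem2 (p : nat) (hp : prime p) (h5 : (5 <= p)%N) :
  (* (i) *)
  ((forall x, x \in seqS2 p -> is_vertex x /\ dist_is (northN p) x 2) /\
   (forall v : fpair p, is_vertex v -> dist_is (northN p) v 2 ->
      exists2 x, x \in seqS2 p & same_vertex x v)) /\
  (* (ii) *)
  farey_circuit (seqS2 p) /\
  (* (iii) *)
  (farey_circuit (seqS1 p) /\ size (seqS1 p) = p /\
   (forall x, x \in seqS1 p -> is_vertex x /\ dist_is (northN p) x 1) /\
   (forall v : fpair p, is_vertex v -> dist_is (northN p) v 1 ->
      exists2 x, x \in seqS1 p & same_vertex x v) /\
   size (seqS2 p) = (p * (p - 4))%N) /\
  (* (iv) *)
  #|poles p| = (p.-1)./2.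
Proof.
have [q p_eq] := prime_ge5_shape hp h5.
split; [split | split; [|split; [split; [|split; [|split; [|split]]] |]]].
- exact: seqS2_dist2 hp p_eq.
- by move=> v _ /(dist2_mem_seqS2 hp p_eq).
- exact: farey_circuit_seqS2 hp p_eq.
- exact: farey_circuit_seqS1 hp p_eq.
- exact: size_seqS1.
- exact: seqS1_dist1.
- by move=> v _ /(dist1_mem_seqS1 hp).
- exact: size_seqS2 hp p_eq.
- exact: card_poles hp p_eq.
Qed.
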